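(* Let $b_0,\dots,b_{n-1}\in\{0,1\}$, $D=\Theta^{-1}[b_0,\dots,b_{n-1}]_0\subset\Omega$, and let $1\le r<k\le s$ be integers. Then $\mathbb P(\{\omega_0=s\}\cap D)\le\mathbb P(\{\omega_0=r\}\cap D)+\mathbb P(\{\omega_0=k\}\cap D)$.
   Context: $\Omega=\mathbb N_+^{\mathbb N}$ with $\mathbb P$ the product measure $\mathbb P[a_0,\dots,a_{m-1}]=\prod_{j<m}2^{-a_j}$ (i.i.d. coordinates with $\mathbb P(\omega_j=a)=2^{-a}$). $\theta(a_1,a_2)=1$ if $a_2=a_1+1$ and $0$ otherwise; $\Theta:\Omega\to\{0,1\}^{\mathbb N}$, $(\Theta\omega)_j=\theta(\omega_j,\omega_{j+1})$; $[b_0,\dots,b_{n-1}]_0=\{\gamma\in\{0,1\}^{\mathbb N}:\gamma_j=b_j,0\le j<n\}$. *)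

From Stdlib Require Import Reals Lra Lia Arith List.
Open Scope R_scope.

(* A point of Omega = N_+^N is a sequence omega : nat -> nat (coordinates >= 1). *)
Definition Omega := nat -> nat.

(* theta(a1,a2) = 1 iff a2 = a1 + 1 ; encoded as a boolean (true = 1, false = 0) *)
Definition theta (a1 a2 : nat) : bool := Nat.eqb a2 (S a1).

Definition Theta (w : Omega) (j : nat) : bool := theta (w j) (w (S j)).

Definition inD (n : nat) (b : nat -> bool) (w : Omega) : bool :=
  forallb (fun j => Bool.eqb (Theta w j) (b j)) (seq 0 n).

Fixpoint rsum (N : nat) (g : nat -> R) : R :=
  match N with 0 => 0 | S N' => rsum N' g + g (S N') end.

Fixpoint csum (k N : nat) (F : list nat -> R) : R :=
  match k with
  | 0 => F nil
  | S k' => rsum N (fun a => csum k' N (fun l => F (a :: l)))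
  end.

Definition ext (l : list nat) : Omega := fun j => nth j l 1%nat.

(* product measure of the cylinder [a_0,...,a_{m-1}] : prod 2^{-a_j} *)
Definition weight (l : list nat) : R :=
  fold_right (fun a acc => (/ 2) ^ a * acc) 1 l.

(* N-th approximation of P(E): sum of P[a_0..a_{N-1}] over prefixes with
   entries in {1..N} for which E holds.  For events depending on finitely
   many coordinates (cylinder events) this converges to P(E). *)
Definition Papprox (N : nat) (E : Omega -> bool) : R :=
  csum N N (fun l => if E (ext l) then weight l else 0).

Definition Prob (E : Omega -> bool) (p : R) : Prop :=
  Un_cv (fun N => Papprox N E) p.

(* Write P({w_0 = a} /\ D) = 2^-a g(a), g(a) being the probability of D
   given w_0 = a, and show 2^-s g(s) <= 2^-r g(r) + 2^-k g(k) by induction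
   on n, conditioning on w_1.  For n = 0, g is constant and 2^-s <= 2^-r.
   If b_0 = 1 then g(a) = h(a+1), where h(a') = P({w_1 = a'} /\ D') for the
   shifted cylinder D', which satisfies the inequality by induction; since
   2^-a decreases, so does 2^-a h(a+1).  If b_0 = 0 then g(a) = T - h(a+1)
   with T = sum h, and h(r+1) + h(k+1) <= T because r <> k.  The argument is
   run on the approximations with coordinates cut off at N (cutting off
   preserves the inequality when r >= 1) and passes to the limit, which
   exists because the events are cylinders. *)

From Stdlib Require Import Reals Arith Bool Lra Lia List.
From Coquelicot Require Import Coquelicot.
Open Scope R_scope.

Lemma rsum_ext N f g : (forall a, f a = g a) -> rsum N f = rsum N g.
Proof. intros H; induction N; simpl; [reflexivity | rewrite IHN, H; reflexivity]. Qed.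

Lemma rsum_le N f g : (forall a, f a <= g a) -> rsum N f <= rsum N g.
Proof. intros H; induction N; simpl; [lra | specialize (H (S N)); lra]. Qed.

Lemma rsum_nonneg N f : (forall a, 0 <= f a) -> 0 <= rsum N f.
Proof. intros H; induction N; simpl; [lra | specialize (H (S N)); lra]. Qed.

Lemma rsum_plus N f g : rsum N (fun a => f a + g a) = rsum N f + rsum N g.
Proof. induction N; simpl; [lra | rewrite IHN; lra]. Qed.

Lemma rsum_minus N f g : rsum N (fun a => f a - g a) = rsum N f - rsum N g.
Proof. induction N; simpl; [lra | rewrite IHN; lra]. Qed.

Lemma rsum_scal_l N c f : rsum N (fun a => c * f a) = c * rsum N f.
Proof. induction N; simpl; [lra | rewrite IHN; lra]. Qed.

Lemma rsum_scal_r N c f : rsum N (fun a => f a * c) = rsum N f * c.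
Proof. induction N; simpl; [lra | rewrite IHN; lra]. Qed.

Definition restrict (N : nat) (f : nat -> R) (a : nat) : R :=
  if ((1 <=? a) && (a <=? N))%nat then f a else 0.

Lemma restrict_nonneg N f a : (forall a, 0 <= f a) -> 0 <= restrict N f a.
Proof. intros Hf; unfold restrict; destruct (_ && _); [apply Hf | lra]. Qed.

Lemma rsum_indicator N f v :
  rsum N (fun a => if (a =? v)%nat then f a else 0) = restrict N f v.
Proof.
  unfold restrict; induction N as [|N IH]; cbn [rsum].
  - destruct v; reflexivity.
  - rewrite IH. destruct (Nat.eqb_spec (S N) v) as [<- | Hv].
    + rewrite Nat.leb_refl, (proj2 (Nat.leb_gt (S N) N)) by lia. simpl; lra.
    + destruct (1 <=? v)%nat; simpl; [| lra].
      destruct (Nat.leb_spec v N), (Nat.leb_spec v (S N)); try lia; lra.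
Qed.

Lemma restrict_pair_le_rsum N f u v : (forall a, 0 <= f a) -> u <> v ->
  restrict N f u + restrict N f v <= rsum N f.
Proof.
  intros Hf Huv. rewrite <- !rsum_indicator, <- rsum_plus.
  apply rsum_le; intro a; specialize (Hf a).
  destruct (Nat.eqb_spec a u), (Nat.eqb_spec a v); subst; try congruence; lra.
Qed.

Definition bounded_by_smaller_pairs (f : nat -> R) : Prop :=
  forall r k s, (1 <= r)%nat -> (r < k)%nat -> (k <= s)%nat -> f s <= f r + f k.

Lemma bounded_by_smaller_pairs_shift f :
  bounded_by_smaller_pairs f -> bounded_by_smaller_pairs (fun a => f (S a)).
Proof. intros Hf r k s Hr Hrk Hks; apply Hf; lia. Qed.

Lemma bounded_by_smaller_pairs_restrict N f : (forall a, 0 <= f a) ->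
  bounded_by_smaller_pairs f -> bounded_by_smaller_pairs (restrict N f).
Proof.
  intros Hf0 Hf r k s Hr Hrk Hks. unfold restrict.
  destruct (Nat.leb_spec s N).
  - rewrite !(proj2 (Nat.leb_le _ _)) by lia. apply Hf; lia.
  - rewrite andb_false_r.
    assert (0 <= restrict N f r /\ 0 <= restrict N f k) as [] by
      (split; apply restrict_nonneg, Hf0).
    unfold restrict in *; lra.
Qed.

Section Scaling.

Variable c : nat -> R.
Hypothesis c_nonneg : forall a, 0 <= c a.
Hypothesis c_antimono : forall a a', (a <= a')%nat -> c a' <= c a.

Lemma bounded_by_smaller_pairs_scale f : (forall a, 0 <= f a) ->
  bounded_by_smaller_pairs f -> bounded_by_smaller_pairs (fun a => c a * f a).
Proof.
  intros Hf0 Hf r k s Hr Hrk Hks.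
  specialize (Hf r k s Hr Hrk Hks).
  pose proof (c_nonneg s); pose proof (Hf0 r); pose proof (Hf0 k).
  pose proof (c_antimono r s ltac:(lia)); pose proof (c_antimono k s ltac:(lia)).
  nra.
Qed.

Lemma bounded_by_smaller_pairs_scale_complement x T : (forall a, 0 <= x a) ->
  (forall u v, u <> v -> x u + x v <= T) ->
  bounded_by_smaller_pairs (fun a => c a * (T - x a)).
Proof.
  intros Hx0 HT r k s Hr Hrk Hks.
  specialize (HT r k ltac:(lia)).
  pose proof (c_nonneg s); pose proof (Hx0 s); pose proof (Hx0 k); pose proof (Hx0 r).
  pose proof (c_antimono r k ltac:(lia)); pose proof (c_antimono k s ltac:(lia)).
  assert (c s * (T - x s) <= c k * T) by nra.
  (* c r (T - x r) + c k (T - x k) = c k T + (this nonnegative quantity) *)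
  assert (0 <= c r * (T - x r - x k) + (c r - c k) * x k) by nra.
  nra.
Qed.

End Scaling.

Lemma half_pow_nonneg a : 0 <= (/ 2) ^ a.
Proof. apply pow_le; lra. Qed.

Lemma half_pow_antimono a a' : (a <= a')%nat -> (/ 2) ^ a' <= (/ 2) ^ a.
Proof.
  intros H. rewrite !pow_inv. apply Rinv_le_contravar.
  - apply pow_lt; lra.
  - apply Rle_pow; [lra | exact H].
Qed.

Lemma csum_ext K N F F' : (forall l, F l = F' l) -> csum K N F = csum K N F'.
Proof.
  revert F F'; induction K; intros F F' H; simpl; [apply H |].
  apply rsum_ext; intro a; apply IHK; intro l; apply H.
Qed.

Lemma csum_ext_length K N F F' :
  (forall l, length l = K -> F l = F' l) -> csum K N F = csum K N F'.
Proof.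
  revert F F'; induction K; intros F F' H; simpl; [apply H; reflexivity |].
  apply rsum_ext; intro a; apply IHK; intros l Hl; apply H; simpl; lia.
Qed.

Lemma csum_le K N F F' : (forall l, F l <= F' l) -> csum K N F <= csum K N F'.
Proof.
  revert F F'; induction K; intros F F' H; simpl; [apply H |].
  apply rsum_le; intro a; apply IHK; intro l; apply H.
Qed.

Lemma csum_nonneg K N F : (forall l, 0 <= F l) -> 0 <= csum K N F.
Proof.
  revert F; induction K; intros F H; simpl; [apply H |].
  apply rsum_nonneg; intro a; apply IHK; intro l; apply H.
Qed.

Lemma csum_scal_l K N c F : csum K N (fun l => c * F l) = c * csum K N F.
Proof.
  revert F; induction K; intros F; simpl; [reflexivity |].
  rewrite <- rsum_scal_l; apply rsum_ext; intro a; apply IHK.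
Qed.

Lemma csum_app m j N F :
  csum (m + j) N F = csum m N (fun l1 => csum j N (fun l2 => F (l1 ++ l2))).
Proof.
  revert F; induction m; intros F; simpl; [reflexivity |].
  apply rsum_ext; intro a; apply IHm.
Qed.

Lemma csum_mono_range K N F : (forall l, 0 <= F l) -> csum K N F <= csum K (S N) F.
Proof.
  revert F; induction K; intros F H; cbn [csum rsum]; [lra |].
  assert (0 <= csum K (S N) (fun l => F (S N :: l))) by (apply csum_nonneg; auto).
  enough (rsum N (fun a => csum K N (fun l => F (a :: l)))
          <= rsum N (fun a => csum K (S N) (fun l => F (a :: l)))) by lra.
  apply rsum_le; intro a; apply IHK; auto.
Qed.

Lemma weight_nonneg l : 0 <= weight l.
Proof.
  induction l; simpl; [lra |].
  apply Rmult_le_pos; [apply half_pow_nonneg | exact IHl].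
Qed.

Lemma weight_app l1 l2 : weight (l1 ++ l2) = weight l1 * weight l2.
Proof. induction l1; simpl; [lra | rewrite IHl1; ring]. Qed.

Lemma rsum_half_pow N : rsum N (fun a => (/ 2) ^ a) = 1 - (/ 2) ^ N.
Proof. induction N; simpl; [lra | rewrite IHN; field]. Qed.

Lemma csum_weight j N : csum j N weight = (1 - (/ 2) ^ N) ^ j.
Proof.
  induction j; simpl; [reflexivity |].
  rewrite <- IHj, <- rsum_half_pow, <- rsum_scal_r.
  apply rsum_ext; intro a; apply csum_scal_l.
Qed.

Lemma forallb_seq_succ (f : nat -> bool) start n :
  forallb f (seq (S start) n) = forallb (fun j => f (S j)) (seq start n).
Proof. revert start; induction n; intros start; simpl; [reflexivity | now rewrite IHn]. Qed.

Lemma inD_succ n b w : inD (S n) b w =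
  Bool.eqb (Theta w 0) (b 0%nat) && inD n (fun j => b (S j)) (fun j => w (S j)).
Proof. unfold inD; cbn [seq forallb]; now rewrite forallb_seq_succ. Qed.

Lemma inD_prefix n b w w' :
  (forall j, (j <= n)%nat -> w j = w' j) -> inD n b w = inD n b w'.
Proof.
  revert b w w'; induction n as [|n IH]; intros b w w' H; [reflexivity |].
  rewrite !inD_succ. unfold Theta; rewrite (H 0%nat), (H 1%nat) by lia.
  f_equal; apply IH; intros j Hj; apply H; lia.
Qed.

(* [cond_mass N K n b a] approximates P(Theta w in [b_0..b_(n-1)] | w_0 = a),
   summing over the coordinates w_1..w_K restricted to {1..N};
   [joint_mass] approximates P({w_0 = a} /\ D). *)
Definition cond_mass (N K n : nat) (b : nat -> bool) (a : nat) : R :=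
  csum K N (fun l => if inD n b (ext (a :: l)) then weight l else 0).

Definition joint_mass (N K n : nat) (b : nat -> bool) (a : nat) : R :=
  (/ 2) ^ a * cond_mass N K n b a.

Lemma cond_mass_nonneg N K n b a : 0 <= cond_mass N K n b a.
Proof. apply csum_nonneg; intro l; destruct (inD _ _ _); [apply weight_nonneg | lra]. Qed.

Lemma joint_mass_nonneg N K n b a : 0 <= joint_mass N K n b a.
Proof. apply Rmult_le_pos; [apply half_pow_nonneg | apply cond_mass_nonneg]. Qed.

Lemma cond_mass_first_step N K n b a :
  cond_mass N (S K) (S n) b a =
  rsum N (fun a1 => if Bool.eqb (a1 =? S a)%nat (b 0%nat)
                    then joint_mass N K n (fun j => b (S j)) a1 else 0).
Proof.
  unfold cond_mass; cbn [csum]; apply rsum_ext; intro a1.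
  destruct (Bool.eqb (a1 =? S a)%nat (b 0%nat)) eqn:E.
  - unfold joint_mass, cond_mass; rewrite <- csum_scal_l; apply csum_ext; intro l.
    rewrite inD_succ; change (Theta (ext (a :: a1 :: l)) 0) with (a1 =? S a)%nat.
    rewrite E; change (fun j => ext (a :: a1 :: l) (S j)) with (ext (a1 :: l)).
    destruct (inD _ _ _); simpl; ring.
  - transitivity (0 * csum K N weight); [| ring].
    rewrite <- csum_scal_l; apply csum_ext; intro l.
    rewrite inD_succ; change (Theta (ext (a :: a1 :: l)) 0) with (a1 =? S a)%nat.
    rewrite E; simpl; ring.
Qed.

Lemma cond_mass_succ N K n b a :
  cond_mass N (S K) (S n) b a =
  if b 0%nat then restrict N (joint_mass N K n (fun j => b (S j))) (S a)
  else rsum N (joint_mass N K n (fun j => b (S j)))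
       - restrict N (joint_mass N K n (fun j => b (S j))) (S a).
Proof.
  rewrite cond_mass_first_step, <- rsum_indicator; destruct (b 0%nat).
  - apply rsum_ext; intro a1; now destruct (a1 =? S a)%nat.
  - rewrite <- rsum_minus; apply rsum_ext; intro a1; destruct (a1 =? S a)%nat; simpl; ring.
Qed.

Lemma bounded_by_smaller_pairs_const C : 0 <= C -> bounded_by_smaller_pairs (fun _ => C).
Proof. intros HC r k s _ _ _; lra. Qed.

Lemma joint_mass_bounded N n : forall K b, (n <= K)%nat ->
  bounded_by_smaller_pairs (joint_mass N K n b).
Proof.
  induction n as [|n IH]; intros K b HK.
  - exact (bounded_by_smaller_pairs_scale _ half_pow_nonneg half_pow_antimono _
             (fun _ => cond_mass_nonneg N K 0 b 0)
             (bounded_by_smaller_pairs_const _ (cond_mass_nonneg N K 0 b 0))).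
  - destruct K as [|K]; [lia |].
    set (y := joint_mass N K n (fun j => b (S j))).
    assert (Hy0 : forall a, 0 <= y a) by (intro; apply joint_mass_nonneg).
    assert (Hy : bounded_by_smaller_pairs y) by (apply IH; lia).
    assert (Hx0 : forall a, 0 <= restrict N y (S a)) by (intro; now apply restrict_nonneg).
    intros r k s Hr Hrk Hks; unfold joint_mass; rewrite !cond_mass_succ; fold y.
    destruct (b 0%nat).
    + exact (bounded_by_smaller_pairs_scale _ half_pow_nonneg half_pow_antimono _ Hx0
               (bounded_by_smaller_pairs_shift _
                  (bounded_by_smaller_pairs_restrict N y Hy0 Hy)) r k s Hr Hrk Hks).
    + exact (bounded_by_smaller_pairs_scale_complement _ half_pow_nonneg half_pow_antimono
               _ (rsum N y) Hx0
               (fun u v Huv => restrict_pair_le_rsum N y (S u) (S v) Hy0 ltac:(congruence))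
               r k s Hr Hrk Hks).
Qed.

Lemma Papprox_first_coord K n b a :
  Papprox (S K) (fun w => (w 0%nat =? a)%nat && inD n b w)
  = restrict (S K) (joint_mass (S K) K n b) a.
Proof.
  rewrite <- rsum_indicator; unfold Papprox; cbn [csum]; apply rsum_ext; intro a0.
  destruct (a0 =? a)%nat eqn:E.
  - apply Nat.eqb_eq in E; subst a0.
    unfold joint_mass, cond_mass; rewrite <- csum_scal_l; apply csum_ext; intro l.
    change (ext (a :: l) 0%nat) with a; rewrite Nat.eqb_refl.
    destruct (inD _ _ _); simpl; ring.
  - transitivity (0 * csum K (S K) weight); [| ring].
    rewrite <- csum_scal_l; apply csum_ext; intro l.
    change (ext (a0 :: l) 0%nat) with a0; rewrite E; simpl; ring.
Qed.

Lemma nat_sq_le_two_pow N : (N * N <= 2 * 2 ^ N)%nat.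
Proof.
  induction N as [|N IH]; [simpl; lia |].
  destruct (Nat.le_gt_cases N 2).
  - destruct N as [|[|[|N]]]; simpl; lia.
  - rewrite Nat.pow_succ_r'; nia.
Qed.

Lemma mul_half_pow_le N : (1 <= N)%nat -> INR N * (/ 2) ^ N <= 2 / INR N.
Proof.
  intros HN.
  assert (HNpos : 0 < INR N) by (apply lt_0_INR; lia).
  assert (Hpow : 0 < 2 ^ N) by (apply pow_lt; lra).
  assert (Hsq : INR N * INR N <= 2 * 2 ^ N).
  { replace (2 * 2 ^ N) with (INR 2 * INR 2 ^ N) by (f_equal; simpl; lra).
    rewrite <- pow_INR, <- !mult_INR.
    apply le_INR, nat_sq_le_two_pow. }
  rewrite pow_inv. apply (Rmult_le_reg_r (INR N * 2 ^ N)); [nra |].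
  replace (INR N * / 2 ^ N * (INR N * 2 ^ N)) with (INR N * INR N) by (field; lra).
  replace (2 / INR N * (INR N * 2 ^ N)) with (2 * 2 ^ N) by (field; lra).
  exact Hsq.
Qed.

Lemma pow_one_sub_ge x j : 0 <= x <= 1 -> 1 - INR j * x <= (1 - x) ^ j.
Proof.
  intros Hx; induction j; [simpl; lra |].
  rewrite S_INR; cbn [pow]. pose proof (pos_INR j). nra.
Qed.

Lemma pow_le_one x j : 0 <= x <= 1 -> x ^ j <= 1.
Proof. intros Hx; rewrite <- (pow1 j); apply pow_incr; lra. Qed.

(* Squeeze between 1 and 1 - N 2^-N >= 1 - 2/N (Bernoulli). *)
Lemma is_lim_seq_mass_pow m : is_lim_seq (fun N => (1 - (/ 2) ^ N) ^ (N - m)) 1.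
Proof.
  apply is_lim_seq_le_le_loc with (u := fun N => 1 - 2 / INR N) (w := fun _ => 1).
  - exists 1%nat; intros N HN.
    assert (0 <= (/ 2) ^ N <= 1) by (split; [apply half_pow_nonneg | apply pow_le_one; lra]).
    split; [| apply pow_le_one; lra].
    pose proof (pow_one_sub_ge _ (N - m) H); pose proof (mul_half_pow_le N HN).
    assert (INR (N - m) <= INR N) by (apply le_INR; lia).
    nra.
  - replace (Finite 1) with (Finite (1 - 2 * 0)) by (f_equal; ring).
    apply is_lim_seq_minus'; [apply is_lim_seq_const |].
    apply is_lim_seq_scal_l with (lu := 0).
    replace (Finite 0) with (Rbar_inv p_infty) by reflexivity.
    apply is_lim_seq_inv; [apply is_lim_seq_INR | discriminate].
  - apply is_lim_seq_const.
Qed.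

(* An event depending on the first [m] coordinates has
   [Papprox N E = A N * (1 - 2^-N)^(N - m)] with [A] nondecreasing and
   bounded, so the approximations converge. *)
Lemma Prob_cylinder E m :
  (forall w w', (forall j, (j < m)%nat -> w j = w' j) -> E w = E w') ->
  exists p, Prob E p.
Proof.
  intros Hdep.
  set (A := fun N => csum m N (fun l => if E (ext l) then weight l else 0)).
  assert (Hsplit : forall N, (m <= N)%nat ->
            Papprox N E = A N * (1 - (/ 2) ^ N) ^ (N - m)).
  { intros N HN; unfold Papprox, A.
    replace (csum N N) with (csum (m + (N - m)) N) by (f_equal; lia).
    rewrite csum_app, <- csum_weight, Rmult_comm, <- csum_scal_l.
    apply csum_ext_length; intros l1 Hl1.
    rewrite Rmult_comm, <- csum_scal_l; apply csum_ext; intro l2.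
    rewrite (Hdep (ext (l1 ++ l2)) (ext l1)), weight_app.
    - destruct (E (ext l1)); ring.
    - intros j Hj; apply app_nth1; lia. }
  assert (Hgrow : Un_growing A).
  { intro N; apply csum_mono_range; intro l.
    destruct (E _); [apply weight_nonneg | lra]. }
  assert (Hub : has_ub A).
  { exists 1; intros x [N ->]; unfold A.
    apply Rle_trans with (csum m N weight).
    - apply csum_le; intro l; destruct (E _); [lra | apply weight_nonneg].
    - rewrite csum_weight; apply pow_le_one.
      pose proof (half_pow_nonneg N); pose proof (pow_le_one (/ 2) N); lra. }
  destruct (growing_cv A Hgrow Hub) as [l Hl].
  exists l; apply is_lim_seq_Reals; rewrite <- (Rmult_1_r l).
  apply is_lim_seq_ext_loc with (fun N => A N * (1 - (/ 2) ^ N) ^ (N - m)).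
  - exists m; intros N HN; symmetry; apply Hsplit; lia.
  - apply is_lim_seq_mult'; [apply is_lim_seq_Reals, Hl | apply is_lim_seq_mass_pow].
Qed.

Lemma first_coord_event_prefix n b a w w' :
  (forall j, (j < S n)%nat -> w j = w' j) ->
  ((w 0%nat =? a)%nat && inD n b w) = ((w' 0%nat =? a)%nat && inD n b w').
Proof.
  intros H; rewrite (H 0%nat) by lia.
  rewrite (inD_prefix n b w w'); [reflexivity |].
  intros j Hj; apply H; lia.
Qed.

Theorem lemma5 (n : nat) (b : nat -> bool) (r k s : nat)
  (hr : (1 <= r)%nat) (hrk : (r < k)%nat) (hks : (k <= s)%nat) :
  exists ps pr pk : R,
    Prob (fun w => Nat.eqb (w 0%nat) s && inD n b w) ps /\
    Prob (fun w => Nat.eqb (w 0%nat) r && inD n b w) pr /\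
    Prob (fun w => Nat.eqb (w 0%nat) k && inD n b w) pk /\
    ps <= pr + pk.
Proof.
  destruct (Prob_cylinder _ _ (first_coord_event_prefix n b s)) as [ps Hs].
  destruct (Prob_cylinder _ _ (first_coord_event_prefix n b r)) as [pr Hr].
  destruct (Prob_cylinder _ _ (first_coord_event_prefix n b k)) as [pk Hk].
  exists ps, pr, pk; repeat split; auto.
  apply is_lim_seq_Reals in Hs, Hr, Hk.
  refine (is_lim_seq_le_loc _ _ _ _ _ Hs (is_lim_seq_plus' _ _ _ _ Hr Hk)).
  exists (S n); intros [|K] HK; [lia |].
  rewrite !Papprox_first_coord.
  apply bounded_by_smaller_pairs_restrict; auto using joint_mass_nonneg.
  apply joint_mass_bounded; lia.
Qed.
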